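(* Let $\mathcal{N}_{A,n}$ be the number of vertices of $\mathcal{T}_n$ at distance $D_n$ from $(0,0)$. Then $\mathcal{N}_{A,1}=3$, $\mathcal{N}_{A,2}=9$, and for $n>2$, $\mathcal{N}_{A,n}=6$ if $n$ is odd and $\mathcal{N}_{A,n}=12$ if $n$ is even.
   Context: For $n\in\mathbb{N}$ let $G_n=\mathbb{Z}_{2^n}\times\mathbb{Z}_{2^n}$ (additive group). Let $S=\{\pm(1,0),\pm(0,1),\pm(1,1)\}$. The undirected graph $\mathcal{T}_n$ is the Cayley graph $\Gamma(G_n,S)$: vertex set $G_n$, each vertex $u$ adjacent to $u+s$ for every $s\in S$ (arithmetic modulo $2^n$). $D_n$ denotes the diameter of $\mathcal{T}_n$ (maximum over pairs of vertices of shortest-path length). *)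

From mathcomp Require Import all_boot all_order all_algebra.
Unset Printing Implicit Defensive.
Import GRing.Theory.

(* Vertex set of T_n: Z_{2^n} x Z_{2^n}  (for n >= 1, 2^n >= 2 so 'Z_(2^n) is
   exactly Z/2^n Z). *)
Definition V (n : nat) : finType := ('Z_(2 ^ n) * 'Z_(2 ^ n))%type.

Definition gens (n : nat) : seq ('Z_(2 ^ n) * 'Z_(2 ^ n)) :=
  [:: (1, 0); (-1, 0); (0, 1); (0, -1); (1, 1); (-1, -1)]%R.

Definition adj (n : nat) : rel (V n) :=
  fun u v => has (fun s : 'Z_(2 ^ n) * 'Z_(2 ^ n) =>
                    v == ((u.1 + s.1)%R, (u.2 + s.2)%R)) (gens n).

Definition walk (n k : nat) (u v : V n) : bool :=
  [exists p : k.-tuple (V n), path (@adj n) u p && (last u p == v)].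

(* Shortest-path distance (the graph is finite and connected, so the minimum
   is attained below #|V n|; #|V n| is only a default never reached). *)
Definition dist (n : nat) (u v : V n) : nat :=
  \big[minn/#|V n|]_(k < #|V n| | walk n k u v) k.

Definition diam (n : nat) : nat := \max_(uv : V n * V n) dist n uv.1 uv.2.

Definition NA (n : nat) : nat :=
  #|[set v : V n | dist n ((0 : 'Z_(2 ^ n))%R, (0 : 'Z_(2 ^ n))%R) v == diam n]|.

From mathcomp Require Import all_boot all_order all_algebra.
From mathcomp Require Import zify ring.
Set Implicit Arguments.
Unset Strict Implicit.
Unset Printing Implicit Defensive.
Import GRing.Theory.

(* Write a vertex difference as w = (x, y) with 0 <= x, y < M = 2^n.  Lifting w
   to Z^2 as (x - i M, y - j M) with i, j in {0, 1} and going straight along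
   the generators gives walks of the four lengths combined in [torus_len]; in
   the other direction [torus_len] grows by at most one along each edge.  So
   the graph distance is d(u, v) = torus_len (v - u), and the theorem becomes
   an exercise in piecewise linear arithmetic: for M = 3t + 2 (n odd) the
   maximum of [torus_len] is 2t + 1, attained at six points, and for M = 3t + 1
   (n even) it is 2t, attained at twelve points. *)

(* In Z^2 the word length of (a, b) is max(|a|, |b|) when a, b have the same
   sign and |a| + |b| otherwise; these are its values on the four lifts. *)
Definition torus_len (M x y : nat) : nat :=
  minn (minn (maxn x y) (y + (M - x))) (minn (x + (M - y)) (maxn (M - x) (M - y))).

Lemma torus_len_leq M x y h : (torus_len M x y <= h) =
  [|| maxn x y <= h, y + (M - x) <= h, x + (M - y) <= h | maxn (M - x) (M - y) <= h].
Proof. by rewrite /torus_len !geq_min !orbA. Qed.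

Lemma torus_len_le_max M x y : torus_len M x y <= maxn x y.
Proof. by rewrite torus_len_leq leqnn. Qed.

Lemma val_Zp_add1 p (a : 'I_p.+2) : val (a + 1)%R = if a == p.+1 :> nat then 0 else a.+1.
Proof.
have lt_a := ltn_ord a; rewrite /= (modn_small (m := 1)) // addn1.
by case: eqP => [->|ne_a]; rewrite ?modnn // modn_small; lia.
Qed.

Lemma val_Zp_sub1 p (a : 'I_p.+2) : val (a - 1)%R = if a == 0 :> nat then p.+1 else a.-1.
Proof.
have lt_a := ltn_ord a; rewrite /= (modn_small (m := 1)) // (modn_small (m := p.+1)) //.
case: eqP => [->|ne_a]; first by rewrite modn_small.
by rewrite (_ : a + p.+1 = a.-1 + p.+2) ?modnDr ?modn_small; lia.
Qed.

Lemma torus_len_step p (a b : 'I_p.+2) s :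
  s \in [:: (1, 0); (-1, 0); (0, 1); (0, -1); (1, 1); (-1, -1)]%R ->
  torus_len p.+2 (a + s.1)%R (b + s.2)%R <= (torus_len p.+2 a b).+1.
Proof.
have lt_a := ltn_ord a; have lt_b := ltn_ord b.
have := leqnn (torus_len p.+2 a b); rewrite {1}torus_len_leq => len_ab.
rewrite torus_len_leq !inE
  => /orP[/eqP->|/orP[/eqP->|/orP[/eqP->|/orP[/eqP->|/orP[/eqP->|/eqP->]]]]];
  rewrite ?addr0 ?val_Zp_add1 ?val_Zp_sub1; repeat case: ifP => /eqP ?; lia.
Qed.

Local Notation side n := (Zp_trunc (2 ^ n)).+2.

Definition torus_norm n (w : V n) : nat := torus_len (side n) w.1 w.2.

Lemma torus_norm_lt n (w : V n) : torus_norm w < side n.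
Proof. by apply: leq_ltn_trans (torus_len_le_max _ _ _) _; rewrite gtn_max !ltn_ord. Qed.

Lemma torus_norm_step n (w g : V n) : g \in gens n ->
  torus_norm (w + g)%R <= (torus_norm w).+1.
Proof. exact: torus_len_step. Qed.

Lemma walk_refl n (u : V n) : walk n 0 u u.
Proof. by apply/existsP; exists [tuple]; rewrite /= eqxx. Qed.

Lemma walk_cat n k1 k2 (u w v : V n) :
  walk n k1 u w -> walk n k2 w v -> walk n (k1 + k2) u v.
Proof.
case/existsP => t1 /andP[p1 /eqP l1]; case/existsP => t2 /andP[p2 /eqP l2].
apply/existsP; exists (cat_tuple t1 t2).
by rewrite /= cat_path last_cat l1 p1 p2 l2 eqxx.
Qed.

Lemma walk_gen n (u : V n) g : g \in gens n -> walk n 1 u (u + g)%R.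
Proof.
move=> hg; apply/existsP; exists [tuple (u + g)%R].
by rewrite /= eqxx !andbT; apply/hasP; exists g.
Qed.

Lemma walk_line n k (u : V n) g : g \in gens n -> walk n k u (u + g *+ k)%R.
Proof.
move=> hg; elim: k => [|k IH]; first by rewrite mulr0n addr0 walk_refl.
by rewrite mulrSr addrA -addn1; apply: walk_cat IH (walk_gen _ hg).
Qed.

Lemma walk_lines n k1 k2 (u v : V n) g1 g2 : g1 \in gens n -> g2 \in gens n ->
  (v - u = g1 *+ k1 + g2 *+ k2)%R -> walk n (k1 + k2) u v.
Proof.
move=> hg1 hg2 /(canRL (addrNK u)) ->; rewrite addrC addrA.
exact: walk_cat (walk_line _ _ hg1) (walk_line _ _ hg2).
Qed.

Lemma torus_norm_le_path n (u : V n) (s : seq (V n)) :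
  path (@adj n) u s -> torus_norm (last u s - u)%R <= size s.
Proof.
elim/last_ind: s => [|s x IH]; first by rewrite subrr /torus_norm torus_len_leq.
rewrite rcons_path last_rcons size_rcons => /andP[/IH len_s /hasP[g hg /eqP ->]].
by rewrite addrAC; apply: leq_trans (torus_norm_step _ hg) _.
Qed.

Lemma torus_norm_le_walk n k (u v : V n) : walk n k u v -> torus_norm (v - u)%R <= k.
Proof.
by case/existsP => t /andP[/torus_norm_le_path + /eqP <-]; rewrite size_tuple.
Qed.

Lemma card_V n : #|V n| = side n * side n.
Proof. by rewrite card_prod card_ord. Qed.

Lemma natr_Zp_side p x : x <= p.+2 -> ((p.+2 - x)%:R = - x%:R :> 'I_p.+2)%R.
Proof. by move=> le_x; rewrite natrB // (@pchar_Zp p.+2) // sub0r. Qed.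

Lemma bigmin_leq (I : eqType) (r : seq I) x0 (P : pred I) (F : I -> nat) j :
  j \in r -> P j -> \big[minn/x0]_(i <- r | P i) F i <= F j.
Proof.
elim: r => // i r IH; rewrite inE big_cons => /predU1P[<- -> | jr Pj].
  exact: geq_minl.
by case: ifP => _; rewrite ?geq_min IH ?orbT.
Qed.

Lemma dist_le_walk n k (u v : V n) : walk n k u v -> k < #|V n| -> dist n u v <= k.
Proof.
move=> uv_k lt_k.
exact: (bigmin_leq _ (fun i : 'I_#|V n| => val i) (mem_index_enum (Ordinal lt_k))).
Qed.

Lemma dist_le_torus_norm n (u v : V n) : dist n u v <= torus_norm (v - u)%R.
Proof.
set x := val (v - u)%R.1; set y := val (v - u)%R.2.
have lt_x : x < side n by apply: ltn_ord.
have lt_y : y < side n by apply: ltn_ord.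
have vu_xy : (v - u = (x%:R, y%:R))%R by rewrite !natr_Zp -surjective_pairing.
have [neg_x neg_y] := (natr_Zp_side (ltnW lt_x), natr_Zp_side (ltnW lt_y)).
have le_card k : k < side n + side n -> k < #|V n|.
  by rewrite card_V; nia.
rewrite /torus_norm /torus_len -/x -/y !leq_min -!andbA.
apply/and4P; split; apply: dist_le_walk; try (apply: le_card; lia).
- case: (leqP y x) => [le_yx | /ltnW le_xy].
  + rewrite -(subnKC le_yx).
    apply: (walk_lines (g1 := (1, 1)%R) (g2 := (1, 0)%R)); rewrite ?inE ?eqxx ?orbT //.
    by rewrite vu_xy !pairMnE; congr pair => /=; rewrite ?natrB ?mul0rn //; ring.
  + rewrite -(subnKC le_xy).
    apply: (walk_lines (g1 := (1, 1)%R) (g2 := (0, 1)%R)); rewrite ?inE ?eqxx ?orbT //.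
    by rewrite vu_xy !pairMnE; congr pair => /=; rewrite ?natrB ?mul0rn //; ring.
- apply: (walk_lines (g1 := (0, 1)%R) (g2 := (-1, 0)%R)); rewrite ?inE ?eqxx ?orbT //.
  by rewrite vu_xy !pairMnE; congr pair => /=; rewrite ?mulNrn ?mul0rn ?neg_x; ring.
- apply: (walk_lines (g1 := (1, 0)%R) (g2 := (0, -1)%R)); rewrite ?inE ?eqxx ?orbT //.
  by rewrite vu_xy !pairMnE; congr pair => /=; rewrite ?mulNrn ?mul0rn ?neg_y; ring.
- case: (leqP x y) => [le_xy | /ltnW le_yx].
  + have -> : maxn (side n - x) (side n - y) = (side n - y) + (y - x) by lia.
    apply: (walk_lines (g1 := (-1, -1)%R) (g2 := (-1, 0)%R)); rewrite ?inE ?eqxx ?orbT //.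
    by rewrite vu_xy !pairMnE; congr pair => /=; rewrite ?mulNrn ?mul0rn ?neg_y ?natrB //; ring.
  + have -> : maxn (side n - x) (side n - y) = (side n - x) + (x - y) by lia.
    apply: (walk_lines (g1 := (-1, -1)%R) (g2 := (0, -1)%R)); rewrite ?inE ?eqxx ?orbT //.
    by rewrite vu_xy !pairMnE; congr pair => /=; rewrite ?mulNrn ?mul0rn ?neg_x ?natrB //; ring.
Qed.

Lemma dist_torus_norm n (u v : V n) : dist n u v = torus_norm (v - u)%R.
Proof.
apply/eqP; rewrite eqn_leq dist_le_torus_norm /=.
apply: (big_ind (fun m => torus_norm (v - u)%R <= m)) => [|a b le_a le_b|k /torus_norm_le_walk //].
  by have := torus_norm_lt (v - u)%R; rewrite card_V; nia.
by rewrite leq_min le_a le_b.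
Qed.

Lemma diam_torus_norm n : diam n = \max_(w : V n) torus_norm w.
Proof.
apply/eqP; rewrite eqn_leq; apply/andP; split.
  by apply/bigmax_leqP => uv _; rewrite dist_torus_norm leq_bigmax.
apply/bigmax_leqP => w _.
by apply: leq_trans (leq_bigmax ((0, w) : V n * V n)%R); rewrite dist_torus_norm subr0.
Qed.

Lemma NA_torus_norm n :
  NA n = #|[set w : V n | torus_norm w == \max_(w : V n) torus_norm w]|.
Proof.
by apply: eq_card => w; rewrite /NA diam_torus_norm !inE dist_torus_norm subr0.
Qed.

Lemma card_torus_sphere n D (L : seq (nat * nat)) : uniq L ->
  (forall x y, ((x, y) \in L) = [&& x < side n, y < side n & torus_len (side n) x y == D]) ->
  #|[set w : V n | torus_norm w == D]| = size L.
Proof.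
move=> uniq_L mem_L.
pose coords (w : V n) := (val w.1, val w.2).
have coords_inj : injective coords by move=> [a b] [c d] [/val_inj -> /val_inj ->].
rewrite cardE -(size_map coords); apply/perm_size/uniq_perm; rewrite ?map_inj_uniq ?enum_uniq //.
move=> [x y]; rewrite mem_L; apply/mapP/idP => [[w] | /and3P[lt_x lt_y len_xy]].
  by rewrite mem_enum inE => len_w [-> ->]; rewrite !ltn_ord.
by exists (Ordinal lt_x, Ordinal lt_y); rewrite // mem_enum inE.
Qed.

Lemma NA_sphere n D (L : seq (nat * nat)) : 0 < n ->
  (forall x y, x < 2 ^ n -> y < 2 ^ n -> torus_len (2 ^ n) x y <= D) -> uniq L ->
  (forall x y, ((x, y) \in L) = [&& x < 2 ^ n, y < 2 ^ n & torus_len (2 ^ n) x y == D]) ->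
  L != [::] -> NA n = size L.
Proof.
move=> n_gt0; have <- : side n = 2 ^ n by apply: Zp_cast; rewrite -{1}(expn0 2) ltn_exp2l.
move=> le_D uniq_L mem_L; case: L => // [[x y] L'] in uniq_L mem_L *.
have := mem_head (x, y) L'; rewrite mem_L => /and3P[lt_x lt_y /eqP len_xy].
have max_D : \max_(w : V n) torus_norm w = D.
  apply/eqP; rewrite eqn_leq; apply/andP; split.
    by apply/bigmax_leqP => w _; apply: le_D; apply: ltn_ord.
  by rewrite -len_xy (leq_bigmax ((Ordinal lt_x, Ordinal lt_y) : V n)).
by rewrite NA_torus_norm max_D (card_torus_sphere uniq_L mem_L).
Qed.

Lemma eqn_leq_pred m h : 0 < h -> (m == h) = (m <= h) && ~~ (m <= h.-1).
Proof. by move=> h_gt0; rewrite eqn_leq -ltnNge prednK. Qed.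

Definition torus_sphere_3t2 t : seq (nat * nat) :=
  [:: (t, 2*t+1); (t.+1, 2*t+1); (t.+1, 2*t+2); (2*t+1, t); (2*t+1, t.+1); (2*t+2, t.+1)].

Lemma torus_len_le_3t2 t x y : x < 3*t+2 -> y < 3*t+2 -> torus_len (3*t+2) x y <= 2*t+1.
Proof. rewrite torus_len_leq; lia. Qed.

Lemma mem_torus_sphere_3t2 t x y : 0 < t -> ((x, y) \in torus_sphere_3t2 t) =
  [&& x < 3*t+2, y < 3*t+2 & torus_len (3*t+2) x y == 2*t+1].
Proof.
move=> t_gt0; rewrite eqn_leq_pred ?addn1 // !torus_len_leq.
apply/idP/idP => [|bounds]; first by rewrite !inE !xpair_eqE; lia.
(* Pinning down x before y keeps lia from branching over every point of the list. *)
have : x = t \/ x = t.+1 \/ x = 2*t+1 \/ x = 2*t+2 by lia.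
case=> [|[|[|]]] x_eq; rewrite x_eq in bounds *.
- have -> : y = 2*t+1 by lia.
  by rewrite !inE eqxx ?orbT.
- have : y = 2*t+1 \/ y = 2*t+2 by lia.
  by case=> [|] ->; rewrite !inE eqxx ?orbT.
- have : y = t \/ y = t.+1 by lia.
  by case=> [|] ->; rewrite !inE eqxx ?orbT.
- have -> : y = t.+1 by lia.
  by rewrite !inE eqxx ?orbT.
Qed.

Definition torus_sphere_3t1 t : seq (nat * nat) :=
  [:: (t.-1, 2*t); (t, 2*t); (t.+1, 2*t); (t, 2*t+1); (t.+1, 2*t+1); (t.+1, 2*t+2);
      (2*t, t.-1); (2*t, t); (2*t, t.+1); (2*t+1, t); (2*t+1, t.+1); (2*t+2, t.+1)].

Lemma torus_len_le_3t1 t x y : x < 3*t+1 -> y < 3*t+1 -> torus_len (3*t+1) x y <= 2*t.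
Proof. rewrite torus_len_leq; lia. Qed.

Lemma mem_torus_sphere_3t1 t x y : 1 < t -> ((x, y) \in torus_sphere_3t1 t) =
  [&& x < 3*t+1, y < 3*t+1 & torus_len (3*t+1) x y == 2*t].
Proof.
move=> t_gt1; rewrite eqn_leq_pred; last lia.
rewrite !torus_len_leq; apply/idP/idP => [|bounds]; first by rewrite !inE !xpair_eqE; lia.
have : x = t.-1 \/ x = t \/ x = t.+1 \/ x = 2*t \/ x = 2*t+1 \/ x = 2*t+2 by lia.
case=> [|[|[|[|[|]]]]] x_eq; rewrite x_eq in bounds *.
- have -> : y = 2*t by lia.
  by rewrite !inE eqxx ?orbT.
- have : y = 2*t \/ y = 2*t+1 by lia.
  by case=> [|] ->; rewrite !inE eqxx ?orbT.
- have : y = 2*t \/ y = 2*t+1 \/ y = 2*t+2 by lia.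
  by case=> [|[|]] ->; rewrite !inE eqxx ?orbT.
- have : y = t.-1 \/ y = t \/ y = t.+1 by lia.
  by case=> [|[|]] ->; rewrite !inE eqxx ?orbT.
- have : y = t \/ y = t.+1 by lia.
  by case=> [|] ->; rewrite !inE eqxx ?orbT.
- have -> : y = t.+1 by lia.
  by rewrite !inE eqxx ?orbT.
Qed.

Lemma uniq_torus_sphere_3t2 t : 0 < t -> uniq (torus_sphere_3t2 t).
Proof. by move=> t_gt0; rewrite /= !inE !xpair_eqE !negb_or; repeat (apply/andP; split); lia. Qed.

Lemma uniq_torus_sphere_3t1 t : 1 < t -> uniq (torus_sphere_3t1 t).
Proof. by move=> t_gt1; rewrite /= !inE !xpair_eqE !negb_or; repeat (apply/andP; split); lia. Qed.

Lemma NA_3t2 n t : 0 < t -> 2 ^ n = 3 * t + 2 -> NA n = 6.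
Proof.
move=> t_gt0 pow_n; have n_gt0 : 0 < n by case: n pow_n => //; lia.
rewrite (@NA_sphere n (2 * t + 1) (torus_sphere_3t2 t)) ?pow_n ?uniq_torus_sphere_3t2 //.
- exact: torus_len_le_3t2.
- by move=> x y; rewrite mem_torus_sphere_3t2.
Qed.

Lemma NA_3t1 n t : 1 < t -> 2 ^ n = 3 * t + 1 -> NA n = 12.
Proof.
move=> t_gt1 pow_n; have n_gt0 : 0 < n by case: n pow_n => //; lia.
rewrite (@NA_sphere n (2 * t) (torus_sphere_3t1 t)) ?pow_n ?uniq_torus_sphere_3t1 //.
- exact: torus_len_le_3t1.
- by move=> x y; rewrite mem_torus_sphere_3t1.
Qed.

Lemma expn2_mod3 n : 2 ^ n %% 3 = if odd n then 2 else 1.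
Proof. by elim: n => // n IH; rewrite expnS -modnMmr IH /=; case: (odd n). Qed.

Theorem mainTheorem6 :
  NA 1 = 3 /\ NA 2 = 9 /\
  (forall n : nat, 2 < n -> NA n = (if odd n then 6 else 12)).
Proof.
split.
  apply: (@NA_sphere 1 1 [:: (0, 1); (1, 0); (1, 1)]) => //.
    by move=> [|[|x]] [|[|y]].
  by move=> [|[|x]] [|[|y]].
split.
  apply: (@NA_sphere 2 2
    [:: (0, 2); (1, 2); (1, 3); (2, 0); (2, 1); (2, 2); (2, 3); (3, 1); (3, 2)]) => //.
    by move=> [|[|[|[|x]]]] [|[|[|[|y]]]].
  by move=> [|[|[|[|x]]]] [|[|[|[|y]]]].
move=> n n_gt2; have := divn_eq (2 ^ n) 3; rewrite expn2_mod3 mulnC.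
have le_pow m : m <= n -> 2 ^ m <= 2 ^ n by move=> le_mn; rewrite leq_exp2l.
case: ifP => odd_n pow_n.
  by apply: (NA_3t2 _ pow_n); have := le_pow 3 n_gt2; lia.
have n_gt3 : 3 < n by rewrite ltn_neqAle n_gt2 andbT; apply: contraFneq odd_n => <-.
by apply: (NA_3t1 _ pow_n); have := le_pow 4 n_gt3; lia.
Qed.
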